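(* Let $p$ be an odd prime, $S$ a finite $p$-group and $\mathcal{F}$ a saturated fusion system on $S$. Let $E$ be an $\mathcal{F}$-essential subgroup of $S$ of rank $2$. If $E$ is not $\mathcal{F}$-characteristic in $N_S(E)$ and $\Phi(E)\le Z(E)$, then $E$ is an $\mathcal{F}$-pearl.
   Context: Rank of a finite group: minimal size of a generating set. For $P\le S$, $\mathrm{Aut}_{\mathcal{F}}(P)=\mathrm{Hom}_{\mathcal{F}}(P,P)$, $\mathrm{Out}_{\mathcal{F}}(P)=\mathrm{Aut}_{\mathcal{F}}(P)/\mathrm{Inn}(P)$, $P^{\mathcal{F}}=\{P\alpha:\alpha\in\mathrm{Hom}_{\mathcal{F}}(P,S)\}$. $E\le S$ is $\mathcal{F}$-essential if $C_S(P)\le P$ and $|N_S(E)|\ge|N_S(P)|$ for all $P\in E^{\mathcal{F}}$, and $\mathrm{Out}_{\mathcal{F}}(E)$ has a strongly $p$-embedded subgroup. For $Q\le P\le S$, $Q$ is $\mathcal{F}$-characteristic in $P$ if $Q$ is normalized by $\mathrm{Aut}_{\mathcal{F}}(P)$. An $\mathcal{F}$-pearl is an $\mathcal{F}$-essential subgroup that is either elementary abelian of order $p^2$ or non-abelian of order $p^3$. *)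

From mathcomp Require Import all_boot all_order all_fingroup all_solvable.
Set Implicit Arguments. Unset Strict Implicit. Unset Printing Implicit Defensive.
Import GroupScope.
Local Open Scope group_scope.

Section FusionDefs.
Variable gT : finGroupType.

(* A fusion system F on S is encoded by the predicate  F P f  meaning
   "f (restricted to P) is a morphism in Hom_F(P, S)". *)
Definition fusion_pred := {set gT} -> {ffun gT -> gT} -> bool.

Definition conjf (g : gT) : {ffun gT -> gT} := [ffun x => x ^ g].

Definition is_fusion_system (S : {set gT}) (F : fusion_pred) : Prop :=
  [/\
      (forall P f, F P f ->
         [/\ group_set P, P \subset S, {in P &, {morph f : x y / x * y}},
             {in P &, injective f} & f @: P \subset S]),
      (forall P (f g : {ffun gT -> gT}), F P f -> {in P, f =1 g} -> F P g),
      (forall P : {group gT}, forall s, P \subset S -> s \in S -> F P (conjf s)),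
      (forall P (Q : {group gT}) f, F P f -> Q \subset P -> F Q f) &
      (
      (forall P (f g : {ffun gT -> gT}), F P f -> F (f @: P) g -> F P [ffun x => g (f x)]) /\
      (forall P f, F P f -> exists g, F (f @: P) g /\ {in P, forall x, g (f x) = x}))].

Definition AutF (F : fusion_pred) (P : {set gT}) : {set {perm gT}} :=
  [set a in Aut P | F P [ffun x => a x]].

Definition AutS (S P : {set gT}) : {set {perm gT}} :=
  [set a in Aut P | [exists g in 'N_S(P), [forall x in P, a x == x ^ g]]].

Definition InnAut (P : {set gT}) : {set {perm gT}} :=
  [set a in Aut P | [exists g in P, [forall x in P, a x == x ^ g]]].

Definition OutF (F : fusion_pred) (P : {set gT}) := (AutF F P / InnAut P)%g.

Definition fully_normalized (S : {set gT}) (F : fusion_pred) (P : {set gT}) :=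
  forall f, F P f -> #|'N_S(f @: P)| <= #|'N_S(P)|.

Definition fully_centralized (S : {set gT}) (F : fusion_pred) (P : {set gT}) :=
  forall f, F P f -> #|'C_S(f @: P)| <= #|'C_S(P)|.

Definition N_phi (S P : {set gT}) (f : {ffun gT -> gT}) : {set gT} :=
  [set g in 'N_S(P) | [exists h in 'N_S(f @: P),
                         [forall y in P, f (y ^ g) == (f y) ^ h]]].

(* Saturation, in the form of [AKO, Definition I.2.2] *)
Definition saturated_fusion_system (p : nat) (S : {set gT}) (F : fusion_pred) :=
  is_fusion_system S F /\
  (forall P : {group gT}, P \subset S -> fully_normalized S F P ->
     fully_centralized S F P /\ p.-Sylow(AutF F P) (AutS S P)) /\
  (forall (P : {group gT}) f, F P f -> fully_centralized S F (f @: P) ->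
     exists f', F (N_phi S P f) f' /\ {in P, f' =1 f}).

End FusionDefs.

Definition has_strongly_p_embedded (p : nat) (rT : finGroupType) (G : {set rT}) :=
  exists H : {group rT},
    [/\ H \proper G, p %| #|H| &
        forall x, x \in G :\: H -> ~~ (p %| #|H :&: H :^ x|)].

Section FusionDefs2.
Variable gT : finGroupType.


Definition essential (p : nat) (S : {set gT}) (F : fusion_pred gT) (E : {group gT}) :=
  [/\ E \subset S,
      (forall f, F E f -> 'C_S(f @: E) \subset f @: E /\ #|'N_S(E)| >= #|'N_S(f @: E)|) &
      has_strongly_p_embedded p (OutF F E)].

Definition F_characteristic (F : fusion_pred gT) (Q P : {set gT}) :=
  forall a, a \in AutF F P -> [set a x | x in Q] = Q.

Definition pearl (p : nat) (S : {set gT}) (F : fusion_pred gT) (E : {group gT}) :=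
  essential p S F E /\
  ((p.-abelem E && (#|E| == p ^ 2)%N) || (~~ abelian E && (#|E| == p ^ 3)%N)).

End FusionDefs2.

From mathcomp Require Import all_boot all_order all_fingroup all_solvable.
Set Implicit Arguments. Unset Strict Implicit. Unset Printing Implicit Defensive.
Import GroupScope.
Local Open Scope group_scope.

(* Rank 2 gives |E : Phi(E)| = p^2.  As Out_F(E) has a strongly p-embedded
   subgroup, every normal p-subgroup of Aut_F(E) lies in Inn(E).  Burnside's
   coprime-action argument (here only Phi(E) <= Z(E) is needed) shows that the
   stabiliser in Aut_F(E) of an Aut_F(E)-invariant series E >= L >= Phi(E) is
   such a p-subgroup; since C_S(E) <= E, every g in N_S(E) stabilising that
   series lies in E.  An invariant L strictly between Phi(E) and E would thus
   give N_S(E) = E, making E F-characteristic in N_S(E); so Aut_F(E) acts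
   irreducibly on E/Phi(E).
   Some image E2 of E under Aut_F(N_S(E)) contains t outside E with t^p in E,
   and t does not stabilise E >= Phi(E), so c = [e, t] lies outside Phi(E) for
   some e in E.  As E2 has class 2 and p is odd, c^-p = [t^p, e] lies in E'.
   Thus {x in E | x^p in E' Mho^1(Phi(E))} is an invariant subgroup strictly
   above Phi(E), hence equal to E, which forces E' = Phi(E).  Finally
   E = <x, y> with E' = <[x, y]> of order at most p. *)

Lemma prime_square_factors p a b :
  prime p -> (a * b = p ^ 2)%N -> a != 1%N -> b != 1%N -> a = p /\ b = p.
Proof.
move=> pr_p ab na nb.
have : (a %| p ^ 2)%N by rewrite -ab dvdn_mulr.
case/(dvdn_pfactor _ _ pr_p)=> m; case: m => [|[|[|m]]] //= _ am.
- by rewrite am in na.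
- move: ab; rewrite am expn1 (expnS p 1) expn1 => /eqP.
  by rewrite eqn_pmul2l ?prime_gt0 // => /eqP.
- move: ab; rewrite am -{2}(muln1 (p ^ 2)%N) => /eqP.
  by rewrite eqn_pmul2l ?expn_gt0 ?prime_gt0 // => /eqP bb; rewrite bb in nb.
Qed.

Lemma morphic_expg (gT : finGroupType) (W : {group gT}) (u : gT -> gT) x k :
  {in W &, {morph u : x y / x * y}} -> x \in W -> u (x ^+ k) = u x ^+ k.
Proof. by move=> /morphicP uM; apply: (morphX (morphm_morphism uM)). Qed.

Lemma Aut_char_closed (gT : finGroupType) (G H : {group gT}) a x :
  H \char G -> a \in Aut G -> x \in H -> a x \in H.
Proof.
move=> chH Aa Hx; have /charP[sHG chf] := chH.
rewrite -(chf _ (injm_autm Aa) (im_autm Aa)) -(autmE Aa).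
by apply: mem_morphim; rewrite // (subsetP sHG).
Qed.

Lemma coprime_pelt_expg_eq1 (gT : finGroupType) (p q : nat) (x : gT) :
  coprime p q -> p.-elt x -> x ^+ q = 1 -> x = 1.
Proof.
move=> cpq /p_natP[k ox] xq.
have : coprime #[x] q by rewrite ox coprimeXl.
have dvd : #[x] %| q by rewrite order_dvdn xq.
by rewrite /coprime (gcdn_idPl dvd) order_eq1 => /eqP.
Qed.

Lemma pelt_exists_last_outside (gT : finGroupType) (p : nat) (H : {group gT}) t :
  p.-elt t -> t \notin H -> exists2 u, u \in <[t]> :\: H & u ^+ p \in H.
Proof.
move=> /p_natP[k ot] nHt.
have exP : exists n, t ^+ (p ^ n) \in H by exists k; rewrite -ot expg_order.
case: (ex_minnP exP) => m Hm minm.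
have m_gt0 : (0 < m)%N.
  by rewrite lt0n; apply: contraNneq nHt => m0; rewrite m0 expn0 expg1 in Hm.
exists (t ^+ (p ^ m.-1)); last by rewrite -expgM -expnSr prednK.
rewrite inE mem_cycle andbT; apply/negP=> /minm.
by rewrite leqNgt prednK ?leqnn.
Qed.

Section PGroups.
Variables (gT : finGroupType) (p : nat).
Hypothesis pr_p : prime p.
Implicit Types G H L M P Q T : {group gT}.

Lemma Phi_index_rank2 G : p.-group G -> 'm(G) = 2 -> #|G : 'Phi(G)| = (p ^ 2)%N.
Proof.
move=> pG mG; have abQ := Phi_quotient_abelem pG.
have : 'm(G / 'Phi(G)) <= 2 by rewrite -mG quotient_grank ?normal_norm ?Phi_normal.
rewrite grank_abelian ?(abelem_abelian abQ) // (rank_abelem abQ).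
rewrite -card_quotient ?normal_norm ?Phi_normal //.
have := card_pgroup (abelem_pgroup abQ); set n := logn p _ => cQ.
have cyclic_contra : cyclic (G / 'Phi(G)) -> False.
  move/Phi_quotient_cyclic/cyclicP=> [x defG].
  by have := grank_min [set x]; rewrite cards1 -/(cycle x) -defG mG.
rewrite cQ; case: n cQ => [|[|[|k]]] //= cQ _; case: cyclic_contra.
  by move: cQ; rewrite expn0 => /card1_trivg ->; apply: cyclic1.
by apply: prime_cyclic; rewrite cQ expn1.
Qed.

Lemma commg_sub_prime_index T L M : p.-group T -> M <| T -> L <| T ->
  M \subset L -> #|L : M| = p -> [~: L, T] \subset M.
Proof.
move=> pT nsMT nsLT sML iLM.
have nMT := normal_norm nsMT.
have nML : L \subset 'N(M) := subset_trans (normal_sub nsLT) nMT.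
rewrite -quotient_cents2 //.
have prq : prime #|L / M| by rewrite card_quotient ?iLM.
have ntq : L / M != 1 by rewrite -cardG_gt1 prime_gt1.
have nilTM := pgroup_nil (quotient_pgroup M pT).
have := meet_center_nil nilTM (quotient_normal _ nsLT) ntq.
by move/(prime_meetG prq)/subset_trans; apply; apply: subsetIr.
Qed.

Section StronglyEmbedded.
Variables G H : {group gT}.
Hypotheses (prHG : H \proper G) (pH : p %| #|H|)
  (tiH : forall x, x \in G :\: H -> ~~ (p %| #|H :&: H :^ x|)).

(* A larger Sylow subgroup would contain an element of N(P) \ P, which lies
   in H by maximality of P in H, or outside H and then P <= H :&: H :^ x. *)
Lemma strongly_p_embedded_Sylow P : p.-Sylow(H) P -> p.-Sylow(G) P.
Proof.
move=> sylP; have [pP sPH] := (pHall_pgroup sylP, pHall_sub sylP).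
have pdP : p %| #|P|.
  by rewrite (card_Hall sylP) p_part dvdn_exp // logn_gt0 mem_primes pr_p cardG_gt0.
have [R sylR sPR] := Sylow_superset (subset_trans sPH (proper_sub prHG)) pP.
have [-> // | ltPR] := eqVproper sPR; exfalso.
have := nilpotent_proper_norm (pgroup_nil (pHall_pgroup sylR)) ltPR.
case/properP=> _ [x /setIP[Rx nPx] notPx].
have [Hx | nHx] := boolP (x \in H).
  have pPx : p.-group (P <*> <[x]>).
    apply: pgroupS (pHall_pgroup sylR).
    by rewrite join_subG (proper_sub ltPR) cycle_subG Rx.
  have sPxH : P <*> <[x]> \subset H by rewrite join_subG sPH cycle_subG Hx.
  have := sub_pHall sylP pPx (joing_subl _ _) sPxH; move/setP/(_ x).
  by rewrite (negbTE notPx) mem_gen // inE cycle_id orbT.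
have GHx : x \in G :\: H by rewrite inE nHx (subsetP (pHall_sub sylR)).
case/negP: (tiH GHx); apply: dvdn_trans pdP (cardSg _).
by rewrite subsetI sPH -(normP nPx) conjSg.
Qed.

Lemma strongly_p_embedded_normal_pgroup1 Q : Q <| G -> p.-group Q -> Q :=: 1.
Proof.
move=> nsQG pQ; have [P sylP] := Sylow_exists p H.
have sQH : Q \subset H.
  have sylPG := strongly_p_embedded_Sylow sylP.
  apply: subset_trans (pHall_sub sylP).
  exact: subset_trans (pcore_max pQ nsQG) (pcore_sub_Hall sylPG).
have [x GHx] : exists x, x \in G :\: H.
  by case/properP: prHG => _ [x Gx nHx]; exists x; rewrite inE nHx.
apply/eqP; apply: contraR (tiH GHx) => ntQ; have [_ pdQ _] := pgroup_pdiv pQ ntQ.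
apply: dvdn_trans pdQ (cardSg _); rewrite subsetI sQH.
have nQx : x \in 'N(Q) by rewrite (subsetP (normal_norm nsQG)) //; case/setDP: GHx.
by rewrite -(normP nQx) conjSg.
Qed.

End StronglyEmbedded.

End PGroups.

Section PhiCentral.
Variables (gT : finGroupType) (p : nat) (G : {group gT}).
Hypotheses (pG : p.-group G) (PhiZ : 'Phi(G) \subset 'Z(G)).

Lemma mem_Phi_commg x y : x \in G -> y \in G -> [~ x, y] \in 'Phi(G).
Proof. by move=> Gx Gy; rewrite (Phi_joing pG) mem_gen // inE mem_commg. Qed.

Lemma mem_Phi_expp x : x \in G -> x ^+ p \in 'Phi(G).
Proof.
move=> Gx; rewrite (Phi_joing pG) mem_gen // inE orbC -[p]expn1.
by rewrite Mho_p_elt ?(mem_p_elt pG).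
Qed.

Lemma Phi_central_commute x z : x \in G -> z \in 'Phi(G) -> commute x z.
Proof. by move=> Gx /(subsetP PhiZ)/centerP[_ cz]; apply/commute_sym/cz. Qed.

Lemma commgXp1 x y : x \in G -> y \in G -> [~ x, y] ^+ p = 1.
Proof.
move=> Gx Gy; have cy := Phi_central_commute Gy (mem_Phi_commg Gx Gy).
rewrite -commgX //; apply/eqP/commgP.
exact: Phi_central_commute Gx (mem_Phi_expp Gy).
Qed.

Lemma der1_eq_Phi_of_Mho :
  'Mho^1(G) \subset G^`(1) <*> 'Mho^1('Phi(G)) -> G^`(1) = 'Phi(G).
Proof.
move=> sMho; have pPhi := pgroupS (Phi_sub G) pG.
have cPhi : abelian 'Phi(G) := abelianS PhiZ (center_abelian G).
suff defPhi : 'Phi('Phi(G)) <*> G^`(1) = 'Phi(G).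
  by have := Phi_nongen defPhi; rewrite genGid.
have sG'Phi : G^`(1) \subset 'Phi(G) by rewrite (Phi_joing pG) joing_subl.
apply/eqP; rewrite eqEsubset join_subG Phi_sub sG'Phi joingC (Phi_Mho pPhi cPhi).
by rewrite {1}(Phi_joing pG) join_subG joing_subl.
Qed.

Lemma rank2_der1_Phi_structure : prime p -> 'm(G) = 2 -> G^`(1) = 'Phi(G) ->
  (p.-abelem G && (#|G| == p ^ 2)%N) || (~~ abelian G && (#|G| == p ^ 3)%N).
Proof.
move=> pr_p mG der.
have [B defB cardB] := grank_witness G; rewrite mG in cardB.
have /cards2P[x [y [_ Bxy]]] : #|B| == 2 by rewrite cardB.
have Gx : x \in G by rewrite -defB mem_gen // Bxy set21.
have Gy : y \in G by rewrite -defB mem_gen // Bxy set22.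
have defG : <[x]> <*> <[y]> = G.
  apply/eqP; rewrite eqEsubset join_subG !cycle_subG Gx Gy /= -defB gen_subG Bxy.
  by apply/subsetP=> z /set2P[->|->]; rewrite mem_gen // inE cycle_id ?orbT.
have cxy : [~ x, y] \in 'C(<[x]> <*> <[y]>).
  by rewrite defG; case/setIP: (subsetP PhiZ _ (mem_Phi_commg Gx Gy)).
have oG' : #|G^`(1)| = #[[~ x, y]] by rewrite -defG der1_joing_cycles.
have oG : #|G| = (p ^ 2 * #|G^`(1)|)%N.
  by rewrite der -(Phi_index_rank2 pr_p pG mG) mulnC Lagrange ?Phi_sub.
have : #[[~ x, y]] %| p by rewrite order_dvdn commgXp1.
case/(primeP pr_p).2/orP=> /eqP oc.
  rewrite -(trivg_Phi pG) -der oG oG' oc muln1 eqxx andbT.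
  by rewrite trivg_card1 oG' oc.
apply/orP; right; rewrite oG oG' oc -expnSr eqxx andbT.
by apply/negP=> /derG1P G'1; move: pr_p; rewrite -oc -oG' G'1 cards1.
Qed.

Hypothesis odd_p : odd p.

Lemma expMgp x y : x \in G -> y \in G -> (x * y) ^+ p = x ^+ p * y ^+ p.
Proof.
move=> Gx Gy; have Pyx := mem_Phi_commg Gy Gx.
rewrite (expMg_Rmul _ (Phi_central_commute Gy Pyx) (Phi_central_commute Gx Pyx)).
by rewrite bin2odd // expgM commgXp1 // expg1n mulg1.
Qed.

Lemma commgXp x y : x \in G -> x ^ y \in G -> [~ x ^+ p, y] = [~ x, y] ^+ p.
Proof.
move=> Gx Gxy; have Gc : [~ x, y] \in G by rewrite /commg groupM ?groupV.
by rewrite /commg conjXg -{1}(mulKVg x (x ^ y)) expMgp ?groupV // mulKg.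
Qed.

Lemma expp_pre_group_set (M : {group gT}) : group_set [set x in G | x ^+ p \in M].
Proof.
apply/group_setP; split; first by rewrite inE group1 expg1n group1.
move=> x y /setIdP[Gx Mx] /setIdP[Gy My].
by rewrite inE groupM //= expMgp ?groupM.
Qed.

End PhiCentral.

Section CoprimePerm.
Variables (gT : finGroupType) (p q : nat) (u : {perm gT}).
Hypotheses (cpq : coprime p q) (uq : u ^+ q = 1).

Lemma coprime_perm_fix_of_shift (W : {group gT}) x d :
  {in W &, {morph u : x y / x * y}} -> x \in W -> d \in W -> p.-elt d ->
  u d = d -> u x = x * d -> u x = x.
Proof.
move=> uM Wx Wd pd ud uxd.
have uk k : (u ^+ k) x = x * d ^+ k.
  elim: k => [|k IHk]; first by rewrite perm1 mulg1.
  by rewrite expgSr permM IHk uM ?groupX // (morphic_expg _ uM Wd) ud uxd expgS mulgA.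
have : d ^+ q = 1 by apply: (mulgI x); rewrite -uk uq perm1 mulg1.
by move/(coprime_pelt_expg_eq1 cpq pd) => d1; rewrite uxd d1 mulg1.
Qed.

Lemma coprime_perm_abelian_fix (W : {group gT}) :
  p.-group W -> abelian W -> {in W &, {morph u : x y / x * y}} ->
  {in W, forall w, u w \in W} -> {in W, forall w, w^-1 * u w \in 'Mho^1(W)} ->
  {in W, forall w, u w = w}.
Proof.
have [n] := ubnP #|W|; elim: n W => // n IHn W /ltnSE leWn pW cW uM uW cuW.
have [-> w /set1P -> | ntW] := eqVneq W 1%G.
  exact: (morphic_expg 0 uM (group1 W)).
have sW1W : 'Mho^1(W) \subset W := Mho_sub 1 W.
have ltW1W : 'Mho^1(W) \proper W.
  by apply: sub_proper_trans (Phi_proper ntW); rewrite (Phi_joing pW) joing_subr.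
have W1E : 'Mho^1(W) = [set x ^+ p | x in W] by rewrite (MhoEabelian 1 pW cW) expn1.
have fixW1 : {in 'Mho^1(W), forall w, u w = w}.
  apply: IHn; first exact: leq_trans (proper_card ltW1W) leWn.
  - exact: pgroupS sW1W pW.
  - exact: abelianS sW1W cW.
  - by move=> x y /(subsetP sW1W) Wx /(subsetP sW1W) Wy; apply: uM.
  - move=> w /=; rewrite W1E => /imsetP[x Wx ->].
    by rewrite (morphic_expg _ uM Wx); apply: imset_f; apply: uW.
  move=> w /=; rewrite {1}W1E => /imsetP[x Wx ->].
  rewrite (morphic_expg _ uM Wx) -expgVn -expgMn; last first.
    by apply: (centsP cW); rewrite ?groupV ?uW.
  by rewrite -[p]expn1 Mho_p_elt ?cuW ?(mem_p_elt (pgroupS sW1W pW)) ?cuW.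
move=> w Ww; have W1d := cuW w Ww; have Wd := subsetP sW1W _ W1d.
apply: (coprime_perm_fix_of_shift uM Ww Wd (mem_p_elt pW Wd) (fixW1 _ W1d)).
by rewrite mulKVg.
Qed.

End CoprimePerm.

(* [X, u] \subset Y, the commutator [x, u] being written x^-1 * u x. *)
Definition cent_mod (gT : finGroupType) (u : {perm gT}) (X Y : {set gT}) :=
  [forall x in X, x^-1 * u x \in Y].

Lemma cent_modP (gT : finGroupType) (u : {perm gT}) (X Y : {set gT}) :
  reflect {in X, forall x, x^-1 * u x \in Y} (cent_mod u X Y).
Proof. exact: forall_inP. Qed.

Section CentMod.
Variables (gT : finGroupType) (G X Y : {group gT}).
Hypotheses (sXG : X \subset G) (sYG : Y \subset G).
Implicit Types u v b : {perm gT}.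

Lemma cent_mod_shift u x :
  cent_mod u X Y -> x \in X -> exists2 y, y \in Y & u x = x * y.
Proof. by move=> /cent_modP uXY Xx; exists (x^-1 * u x); rewrite ?uXY ?mulKVg. Qed.

Lemma cent_modM u v : v \in Aut G -> {in Y, forall y, v y \in Y} ->
  cent_mod u X Y -> cent_mod v X Y -> cent_mod (u * v) X Y.
Proof.
move=> Av vY uXY vXY; apply/cent_modP=> x Xx.
have [y Yy uxy] := cent_mod_shift uXY Xx; have [z Yz vxz] := cent_mod_shift vXY Xx.
have [Gx Gy] := (subsetP sXG x Xx, subsetP sYG y Yy).
by rewrite permM uxy (morphicP (Aut_morphic Av)) // vxz -mulgA mulKg groupM ?vY.
Qed.

Lemma cent_modJ u b : b \in Aut G -> {in X, forall x, b^-1 x \in X} ->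
  {in Y, forall y, b y \in Y} -> cent_mod u X Y -> cent_mod (u ^ b) X Y.
Proof.
move=> Ab bX bY uXY; apply/cent_modP=> x Xx.
have [y Yy uxy] := cent_mod_shift uXY (bX x Xx).
have [Gbx Gy] := (subsetP sXG _ (bX x Xx), subsetP sYG y Yy).
rewrite conjgE !permM uxy (morphicP (Aut_morphic Ab)) //.
by rewrite -permM mulVg perm1 mulKg bY.
Qed.

End CentMod.

Section AutPhiCentral.
Variables (gT : finGroupType) (p : nat) (E : {group gT}).
Hypotheses (pr_p : prime p) (pE : p.-group E) (PhiZ : 'Phi(E) \subset 'Z(E)).
Implicit Types u : {perm gT}.

Let sPhiE : 'Phi(E) \subset E := Phi_sub E.
Let pPhi : p.-group 'Phi(E) := pgroupS sPhiE pE.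

Lemma Aut_Phi_closed u : u \in Aut E -> {in 'Phi(E), forall x, u x \in 'Phi(E)}.
Proof. by move=> Au x; apply: Aut_char_closed (Phi_char E) Au. Qed.

Lemma cent_mod_Phi_fix_commg u x y : u \in Aut E -> cent_mod u E 'Phi(E) ->
  x \in E -> y \in E -> u [~ x, y] = [~ x, y].
Proof.
move=> Au uEP Ex Ey; rewrite -(autmE Au) morphR //= autmE.
have [f Pf ->] := cent_mod_shift uEP Ex; have [g Pg ->] := cent_mod_shift uEP Ey.
have cPhi w z : w \in E -> z \in 'Phi(E) -> [~ w, z] = 1 /\ [~ z, w] = 1.
  move=> Ew Pz; have cwz := Phi_central_commute PhiZ Ew Pz.
  by split; apply/eqP/commgP; [exact: cwz | exact: commute_sym].
have [[cxg _] [_ cfy]] := (cPhi x g Ex Pg, cPhi y f Ey Pf).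
have [cfg _] := cPhi f g (subsetP sPhiE f Pf) Pg.
rewrite commMgJ !commgMJ cxg cfy cfg !mul1g conj1g mulg1.
have Exy : [~ x, y] \in E by rewrite groupR.
have fixJ z : z \in 'Phi(E) -> [~ x, y] ^ z = [~ x, y].
  by move=> Pz; apply/conjg_fixP/eqP; case: (cPhi _ z Exy Pz).
by rewrite !fixJ.
Qed.

Lemma cent_mod_Phi_Mho u : u \in Aut E -> cent_mod u E 'Phi(E) ->
  cent_mod u 'Phi(E) 'Mho^1('Phi(E)).
Proof.
move=> Au uEP; have uM := morphicP (Aut_morphic Au).
pose X := [set z in E | z^-1 * u z \in 'Mho^1('Phi(E))].
have gX : group_set X.
  apply/group_setP; split.
    by rewrite inE group1 invg1 mul1g (morphic_expg 0 uM (group1 E)) group1.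
  move=> z1 z2 /setIdP[Ez1 X1] /setIdP[Ez2 X2].
  have [f Pf uz1] := cent_mod_shift uEP Ez1; rewrite uz1 mulKg in X1.
  rewrite inE groupM //= uM // uz1 invMg !mulgA mulgKV.
  by rewrite (Phi_central_commute PhiZ (groupVr Ez2) Pf) -mulgA groupM.
suff /subsetP sPhiX : 'Phi(E) \subset Group gX by apply/cent_modP=> x /sPhiX /setIdP[].
rewrite (Phi_joing pE) join_subG; apply/andP; split.
  rewrite derg1 gen_subG; apply/subsetP=> _ /imset2P[x y Ex Ey ->].
  by rewrite inE groupR //= cent_mod_Phi_fix_commg // mulVg group1.
rewrite (MhoE 1 pE) gen_subG; apply/subsetP=> _ /imsetP[x Ex ->].
rewrite expn1 inE groupX //= (morphic_expg _ uM Ex).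
have [f Pf ->] := cent_mod_shift uEP Ex.
rewrite expgMn ?mulKg; last exact: (Phi_central_commute PhiZ Ex Pf).
by rewrite -[p]expn1 Mho_p_elt ?(mem_p_elt pPhi).
Qed.

Lemma coprime_Aut_cent_Phi_trivial u q : u \in Aut E -> coprime p q ->
  u ^+ q = 1 -> cent_mod u E 'Phi(E) -> u = 1.
Proof.
move=> Au cpq uq uEP; have uM := morphicP (Aut_morphic Au).
have fixPhi : {in 'Phi(E), forall w, u w = w}.
  apply: (coprime_perm_abelian_fix cpq uq pPhi).
  - exact: abelianS PhiZ (center_abelian E).
  - by move=> x y /(subsetP sPhiE) Ex /(subsetP sPhiE) Ey; apply: uM.
  - exact: Aut_Phi_closed.
  exact/cent_modP/cent_mod_Phi_Mho.
apply/permP=> x; rewrite perm1.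
have [Ex | nEx] := boolP (x \in E); last exact: (out_Aut Au nEx).
have [d Pd uxd] := cent_mod_shift uEP Ex; have Ed := subsetP sPhiE d Pd.
apply: (coprime_perm_fix_of_shift cpq uq uM Ex Ed _ (fixPhi d Pd) uxd).
exact: mem_p_elt pPhi Pd.
Qed.

Lemma coprime_cent_mod_chain u q (L : {group gT}) : u \in Aut E -> coprime p q ->
  u ^+ q = 1 -> L \subset E -> cent_mod u E L -> cent_mod u L 'Phi(E) ->
  cent_mod u E 'Phi(E).
Proof.
move=> Au cpq uq sLE uEL uLP; have uM := morphicP (Aut_morphic Au).
apply/cent_modP=> x Ex; have [l Ll uxl] := cent_mod_shift uEL Ex.
rewrite uxl mulKg; have El := subsetP sLE l Ll.
have [f Pf ulf] := cent_mod_shift uLP Ll.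
(* Modulo 'Phi(E), u acts as 1 + n with n ^ 2 = 0, so u ^+ k maps x to x l ^+ k. *)
have ukx k : (x * l ^+ k)^-1 * (u ^+ k) x \in 'Phi(E).
  elim: k => [|k IHk]; first by rewrite perm1 mulg1 mulVg group1.
  have [g Pg ukx] : exists2 g, g \in 'Phi(E) & (u ^+ k) x = x * l ^+ k * g.
    by exists ((x * l ^+ k)^-1 * (u ^+ k) x); rewrite ?mulKVg.
  have [Elk Eg] := (groupX k El, subsetP sPhiE g Pg).
  rewrite [u ^+ _.+1]expgSr permM ukx (uM _ _ (groupM Ex Elk) Eg) (uM _ _ Ex Elk) uxl.
  rewrite (morphic_expg _ uM El) ulf expgMn; last first.
    exact: (Phi_central_commute PhiZ El Pf).
  have -> : x * l * (l ^+ k * f ^+ k) * u g = x * l ^+ k.+1 * (f ^+ k * u g).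
    by rewrite expgS !mulgA.
  by rewrite mulKg groupM ?groupX ?Aut_Phi_closed.
have Plq : l ^+ q \in 'Phi(E) by have := ukx q; rewrite uq perm1 invMg mulgKV groupV.
have nPl : l \in 'N('Phi(E)) := subsetP (normal_norm (Phi_normal E)) l El.
apply: coset_idr => //; apply: (coprime_pelt_expg_eq1 cpq).
  exact: mem_p_elt (quotient_pgroup _ pE) (mem_quotient _ El).
by rewrite -morphX //; apply: coset_id.
Qed.

Definition stab_chain (A : {set {perm gT}}) (L : {set gT}) :=
  [set a in A | cent_mod a E L && cent_mod a L 'Phi(E)].

Section StabChain.
Variables (A : {group {perm gT}}) (L : {group gT}).
Hypotheses (sAAut : A \subset Aut E) (sLE : L \subset E)
  (AL : {in A, forall a : {perm gT}, {in L, forall x, a x \in L}}).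

Lemma stab_chain_group_set : group_set (stab_chain A L).
Proof.
apply/group_setP; split.
  rewrite inE group1 /=; apply/andP.
  by split; apply/cent_modP=> x _; rewrite perm1 mulVg group1.
move=> u v /setIdP[Au /andP[uEL uLP]] /setIdP[Av /andP[vEL vLP]].
have Av' := subsetP sAAut v Av.
rewrite inE groupM // (cent_modM (subxx E) sLE Av' (AL Av) uEL vEL).
by rewrite (cent_modM sLE sPhiE Av' (Aut_Phi_closed Av') uLP vLP).
Qed.

Lemma stab_chain_normal : Group stab_chain_group_set <| A.
Proof.
apply/andP; split; first by apply/subsetP=> a /setIdP[].
apply/subsetP=> b Ab; rewrite inE; have Ab' := subsetP sAAut b Ab.
apply/subsetP=> _ /imsetP[u /setIdP[Au /andP[uEL uLP]] ->].
have bVE : {in E, forall x, b^-1 x \in E}.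
  by move=> x; apply: Aut_closed; rewrite groupV.
rewrite inE groupJ //= (cent_modJ (subxx E) sLE Ab' bVE (AL Ab) uEL).
by rewrite (cent_modJ sLE sPhiE Ab' (AL (groupVr Ab)) (Aut_Phi_closed Ab') uLP).
Qed.

Lemma stab_chain_pgroup : p.-group (Group stab_chain_group_set).
Proof.
apply/pgroupP=> q pr_q qd; have [u Uu ou] := Cauchy pr_q qd.
have [-> | nqp] := eqVneq q p; first by rewrite inE.
have [Au /andP[uEL uLP]] := setIdP Uu; have Au' := subsetP sAAut u Au.
have uq : u ^+ q = 1 by rewrite -ou expg_order.
have cpq : coprime p q by rewrite prime_coprime // dvdn_prime2 // eq_sym.
have uEP := coprime_cent_mod_chain Au' cpq uq sLE uEL uLP.
have u1 := coprime_Aut_cent_Phi_trivial Au' cpq uq uEP.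
by move: ou pr_q; rewrite u1 order1 => <-.
Qed.

End StabChain.

End AutPhiCentral.

Section InnerAutomorphisms.
Variables (gT : finGroupType) (G : {group gT}).

Lemma InnAut_group_set : group_set (InnAut G).
Proof.
apply/group_setP; split.
  rewrite inE group1; apply/exists_inP; exists 1; rewrite ?group1 //.
  by apply/forall_inP=> x _; rewrite perm1 conjg1.
move=> a b /setIdP[Aa /exists_inP[g Gg /forall_inP ag]].
move=> /setIdP[Ab /exists_inP[h Gh /forall_inP bh]].
rewrite inE groupM //; apply/exists_inP; exists (g * h); rewrite ?groupM //.
apply/forall_inP=> x Gx.
by rewrite permM (eqP (ag x Gx)) (eqP (bh _ (groupJ Gx Gg))) conjgM.
Qed.

Definition InnAut_group := Group InnAut_group_set.

Lemma Aut_norm_InnAut : Aut G \subset 'N(InnAut G).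
Proof.
apply/subsetP=> a Aa; rewrite inE; apply/subsetP=> _ /imsetP[c /setIdP[Ac Ic] ->].
have [g Gg /forall_inP cg] := exists_inP Ic.
rewrite inE groupJ //; apply/exists_inP; exists (a g); rewrite ?Aut_closed //.
apply/forall_inP=> x Gx; have Gax : a^-1 x \in G by rewrite Aut_closed ?groupV.
rewrite conjgE !permM (eqP (cg _ Gax)) -(autmE Aa) morphJ //= autmE.
by rewrite -permM mulVg perm1.
Qed.

End InnerAutomorphisms.

Section FusionSystem.
Variables (gT : finGroupType) (p : nat) (S E : {group gT}) (F : fusion_pred gT).
Hypotheses (pr_p : prime p) (pS : p.-group S) (isF : is_fusion_system S F)
  (essE : essential p S F E) (PhiZ : 'Phi(E) \subset 'Z(E)).

Let F_ext P (f g : {ffun gT -> gT}) : F P f -> {in P, f =1 g} -> F P g.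
Proof. by case: isF => _ Fext _ _ _; apply: Fext. Qed.

Let F_conj (P : {group gT}) s : P \subset S -> s \in S -> F P (conjf s).
Proof. by case: isF => _ _ Fconj _ _; apply: Fconj. Qed.

Let F_comp P (f g : {ffun gT -> gT}) : F P f -> F (f @: P) g -> F P [ffun x => g (f x)].
Proof. by case: isF => _ _ _ _ [Fcomp _]; apply: Fcomp. Qed.

Let sES : E \subset S. Proof. by case: essE. Qed.
Let pE : p.-group E := pgroupS sES pS.

Local Notation T := 'N_S(E).

Let nsET : E <| T := normalSG sES.
Let sET : E \subset T := normal_sub nsET.
Let pT : p.-group T := pgroupS (subsetIl _ _) pS.

Lemma AutF_sub_Aut : AutF F E \subset Aut E.
Proof. by apply/subsetP=> a /setIdP[]. Qed.

Lemma AutF_group_set : group_set (AutF F E).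
Proof.
have imE a : a \in Aut E -> [ffun x => a x] @: E = E.
  case/setIdP=> /im_perm_on defE _; rewrite -[RHS]defE.
  by apply: eq_imset => x; rewrite ffunE.
apply/group_setP; split.
  rewrite inE group1; apply: F_ext (F_conj sES (group1 S)) _ => x _.
  by rewrite !ffunE perm1 conjg1.
move=> a b /setIdP[Aa Fa] /setIdP[Ab Fb]; rewrite inE groupM //.
have := F_comp Fa; rewrite imE // => /(_ _ Fb) Fab.
by apply: F_ext Fab _ => x _; rewrite !ffunE permM.
Qed.

Definition AutF_group := Group AutF_group_set.

Lemma conj_aut_AutF g : g \in T -> conj_aut E g \in AutF F E.
Proof.
case/setIP=> Sg nEg; rewrite inE (subsetP (Aut_conj_aut E 'N(E))) ?mem_morphim //.
by apply: F_ext (F_conj sES Sg) _ => x Ex; rewrite !ffunE norm_conj_autE.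
Qed.

Lemma essential_centric : 'C_S(E) \subset E.
Proof.
case: essE => _ /(_ (conjf 1) (F_conj sES (group1 S))) [cE _] _.
suff <- : conjf 1 @: E = E by [].
by rewrite -[RHS]imset_id; apply: eq_imset => x; rewrite ffunE conjg1.
Qed.

Lemma conj_aut_InnAut_mem g : g \in T -> conj_aut E g \in InnAut E -> g \in E.
Proof.
move=> /setIP[Sg nEg] /setIdP[_ /exists_inP[e Ee /forall_inP eg]].
suff : g * e^-1 \in E by rewrite groupMr ?groupV.
apply: (subsetP essential_centric); rewrite inE groupM ?groupV ?(subsetP sES e Ee) //=.
apply/centP=> x Ex; apply/commute_sym/commgP/conjg_fixP.
by rewrite conjgM -(norm_conj_autE nEg Ex) (eqP (eg x Ex)) conjgK.
Qed.

Lemma normal_pgroup_AutF_sub_InnAut (U : {group {perm gT}}) :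
  U <| AutF_group -> p.-group U -> U \subset InnAut E.
Proof.
move=> nsUA pU; case: essE => _ _ [H [prH pH tiH]].
have nIU : U \subset 'N(InnAut_group E).
  exact: subset_trans (normal_sub nsUA) (subset_trans AutF_sub_Aut (Aut_norm_InnAut E)).
by rewrite -(quotient_sub1 nIU) (@strongly_p_embedded_normal_pgroup1 _ _ pr_p
  (AutF_group / InnAut_group E)%G H) ?quotient_normal ?quotient_pgroup.
Qed.

Lemma stab_chain_mem (L : {group gT}) g : L \subset E ->
  {in AutF F E, forall a : {perm gT}, {in L, forall x, a x \in L}} -> g \in T ->
  {in E, forall x, [~ x, g] \in L} -> {in L, forall x, [~ x, g] \in 'Phi(E)} ->
  g \in E.
Proof.
move=> sLE AL Tg cEL cLP; apply: conj_aut_InnAut_mem => //.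
have nsUA := stab_chain_normal (A := AutF_group) AutF_sub_Aut sLE AL.
have pU := stab_chain_pgroup (A := AutF_group) pr_p pE PhiZ AutF_sub_Aut sLE AL.
have sUI := normal_pgroup_AutF_sub_InnAut nsUA pU.
apply: (subsetP sUI); rewrite inE conj_aut_AutF //=.
have conjE x : x \in E -> x^-1 * conj_aut E g x = [~ x, g].
  by case/setIP: Tg => _ nEg Ex; rewrite norm_conj_autE.
apply/andP; split; apply/cent_modP=> x Xx; first by rewrite conjE // cEL.
by rewrite conjE ?cLP ?(subsetP sLE).
Qed.

Lemma Phi_commg_mem g : g \in T -> {in E, forall x, [~ x, g] \in 'Phi(E)} -> g \in E.
Proof.
move=> Tg cEP; have sPE := Phi_sub E.
have AP : {in AutF F E, forall a : {perm gT}, {in 'Phi(E), forall x, a x \in 'Phi(E)}}.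
  by move=> a /setIdP[Aa _]; apply: Aut_Phi_closed.
exact: (stab_chain_mem sPE AP Tg cEP (fun x Px => cEP x (subsetP sPE x Px))).
Qed.

Lemma F_characteristic_of_N_sub : T \subset E -> F_characteristic F E T.
Proof.
move=> sTE a /setIdP[Aa _].
have -> : E :=: T by apply/eqP; rewrite eqEsubset sET sTE.
by rewrite -[RHS](im_autm Aa) morphimEsub.
Qed.

Lemma AutF_irreducible_Phi_quotient (L : {group gT}) :
  ~ F_characteristic F E T -> #|E : 'Phi(E)| = (p ^ 2)%N ->
  'Phi(E) \subset L -> L \subset E ->
  {in AutF F E, forall a : {perm gT}, {in L, forall x, a x \in L}} ->
  L :=: 'Phi(E) \/ L :=: E.
Proof.
move=> nchar iEP sPL sLE AL.
have [-> | nLP] := eqVneq (L : {set gT}) 'Phi(E); [by left | right].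
apply/eqP; apply: contra_notT nchar => nLE; apply: F_characteristic_of_N_sub.
have nsLT : L <| T.
  rewrite /normal (subset_trans sLE sET); apply/subsetP=> g Tg; rewrite inE.
  apply/subsetP=> _ /imsetP[x Lx ->]; have [_ nEg] := setIP Tg.
  by rewrite -(norm_conj_autE nEg (subsetP sLE x Lx)) AL ?conj_aut_AutF.
have nsPT : 'Phi(E) <| T := char_normal_trans (Phi_char E) nsET.
have [iEL iLP] : #|E : L| = p /\ #|L : 'Phi(E)| = p.
  apply: prime_square_factors; rewrite ?Lagrange_index // indexg_eq1.
    by apply: contra nLE => sEL; rewrite eqEsubset sLE.
  by apply: contra nLP => sLP; rewrite eqEsubset sLP.
have cET := commg_sub_prime_index pr_p pT nsLT nsET sLE iEL.
have cLT := commg_sub_prime_index pr_p pT nsPT nsLT sPL iLP.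
apply/subsetP=> g Tg; apply: (stab_chain_mem sLE AL Tg) => x Xx.
  by rewrite (subsetP cET) ?mem_commg.
by rewrite (subsetP cLT) ?mem_commg.
Qed.

Lemma not_F_characteristic_image : ~ F_characteristic F E T ->
  exists E2 : {group gT}, [/\ E2 <| T, 'Phi(E2) \subset 'Z(E2) & ~~ (E2 \subset E)].
Proof.
move=> nchar.
have [a /setIdP[Aa _] nE] : exists2 a, a \in AutF F T & [set a x | x in E] != E.
  apply/exists_inP; apply: contra_notT nchar => /exists_inPn allE a /allE.
  by move/negPn/eqP.
have injf := injm_autm Aa.
have imE : autm Aa @* E = [set a x | x in E] by rewrite morphimEsub.
exists (autm Aa @* E)%G; split.
- by have := morphim_normal (autm Aa) nsET; rewrite im_autm.
- by rewrite /= -injm_Phi // -injm_center // morphimS.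
apply: contra nE => sE2E; rewrite -imE eqEcard sE2E.
by rewrite card_injm ?leqnn.
Qed.

Hypothesis odd_p : odd p.

Lemma exists_der1_expp_outside_Phi : ~ F_characteristic F E T ->
  exists2 c, c \in E :\: 'Phi(E) & c ^+ p \in E^`(1).
Proof.
move=> nchar.
have [E2 [nsE2T PhiZ2 /subsetPn[t0 E2t0 notEt0]]] := not_F_characteristic_image nchar.
have pE2 := pgroupS (normal_sub nsE2T) pT.
have [t /setDP[t0t notEt] Etp] := pelt_exists_last_outside (mem_p_elt pE2 E2t0) notEt0.
have E2t : t \in E2 by apply: subsetP t0t; rewrite cycle_subG.
have Tt : t \in T := subsetP (normal_sub nsE2T) t E2t.
have [e Ee notPc] : exists2 e, e \in E & [~ e, t] \notin 'Phi(E).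
  apply/exists_inP; apply: contraR notEt => /exists_inPn cEP.
  by apply: (Phi_commg_mem Tt) => x /cEP /negPn.
have E2te : t ^ e \in E2.
  by rewrite memJ_norm ?(subsetP (normal_norm nsE2T)) ?(subsetP sET).
exists [~ e, t].
  by rewrite inE notPc /commg groupM ?groupV ?memJ_norm //; case/setIP: Tt.
by rewrite -invgR expgVn -(commgXp pE2 PhiZ2 odd_p E2t E2te) groupV mem_commg.
Qed.

Lemma der1_eq_Phi : ~ F_characteristic F E T -> #|E : 'Phi(E)| = (p ^ 2)%N ->
  E^`(1) = 'Phi(E).
Proof.
move=> nchar iEP; have [c /setDP[Ec nPc] E'cp] := exists_der1_expp_outside_Phi nchar.
pose M := (E^`(1) <*> 'Mho^1('Phi(E)))%G.
have chM : M \char E.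
  by rewrite charY ?der_char ?(char_trans (Mho_char 1 _) (Phi_char E)).
pose L := Group (expp_pre_group_set pE PhiZ odd_p M).
have sLE : L \subset E by apply/subsetP=> x /setIdP[].
have sPL : 'Phi(E) \subset L.
  apply/subsetP=> x Px; rewrite inE (subsetP (Phi_sub E)) //= mem_gen // inE orbC.
  by rewrite -[p]expn1 Mho_p_elt ?(mem_p_elt (pgroupS (Phi_sub E) pE)).
have AL : {in AutF F E, forall a : {perm gT}, {in L, forall x, a x \in L}}.
  move=> a /setIdP[Aa _] x /setIdP[Ex Mx].
  rewrite inE Aut_closed //= -(autmE Aa) -morphX //=.
  exact: (Aut_char_closed chM Aa Mx).
have [LP | LE] := AutF_irreducible_Phi_quotient nchar iEP sPL sLE AL.
  by case/negP: nPc; rewrite -LP inE Ec mem_gen // inE E'cp.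
apply: der1_eq_Phi_of_Mho pE PhiZ _.
rewrite (MhoE 1 pE) gen_subG; apply/subsetP=> _ /imsetP[x Ex ->].
by rewrite expn1; move: Ex; rewrite -{1}LE => /setIdP[].
Qed.

End FusionSystem.

Unset Implicit Arguments.

Theorem theorem1p12 (gT : finGroupType) (p : nat) (S E : {group gT})
    (F : fusion_pred gT) :
  prime p -> odd p -> p.-group S ->
  saturated_fusion_system p S F ->
  essential p S F E ->
  'm(E) = 2 (* rank: minimal size of a generating set *) ->
  ~ F_characteristic F E 'N_S(E) ->
  'Phi(E) \subset 'Z(E) ->
  pearl p S F E.
Proof.
move=> pr_p odd_p pS [isF _] essE mE nchar PhiZ.
have pE : p.-group E by apply: pgroupS pS; case: essE.
have iEPhi := Phi_index_rank2 pr_p pE mE.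
have E'Phi := der1_eq_Phi pr_p pS isF essE PhiZ odd_p nchar iEPhi.
by split; last exact: (rank2_der1_Phi_structure pE PhiZ pr_p mE E'Phi).
Qed.
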